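(* If a graph $G$ is a $k$-interval-PCG, then its complement $\overline{G}$ is a $(k+1)$-interval-PCG.
   Context: All trees are unrooted with edges weighted by nonnegative reals; $d_T(u,v)$ is the weight of the path between leaves $u,v$ of $T$. A graph $G$ is a $k$-interval-PCG if there exist a tree $T$ whose leaf set is $V(G)$ and $k$ pairwise disjoint intervals $I_1,\ldots,I_k$ of nonnegative reals such that $\{u,v\}\in E(G)$ iff $d_T(u,v)\in I_i$ for some $i$. The complement $\overline{G}$ has vertex set $V(G)$ and as edges exactly the non-edges of $G$. *)

From HB Require Import structures.
From mathcomp Require Import all_boot all_order all_algebra.
From mathcomp Require Import reals.
Set Implicit Arguments. Unset Strict Implicit. Unset Printing Implicit Defensive.
Import Order.TTheory GRing.Theory Num.Theory.
Local Open Scope ring_scope.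

Definition has_cycle (N : finType) (t : rel N) : Prop :=
  exists (x : N) (p : seq N),
    [/\ (2 <= size p)%N, uniq (x :: p), path t x p & t (last x p) x].

Definition is_tree (N : finType) (t : rel N) : Prop :=
  [/\ irreflexive t, symmetric t, (forall x y, connect t x y) & ~ has_cycle t].

(* Leaves: nodes of degree at most one (degree exactly one as soon as the tree
   has at least two nodes; a one-node tree has its node as a leaf). *)
Definition is_leaf (N : finType) (t : rel N) (x : N) : bool :=
  (#|[set y | t x y]| <= 1)%N.

Fixpoint walk_weight (R : numDomainType) (N : Type) (w : N -> N -> R)
    (x : N) (p : seq N) : R :=
  match p with
  | [::] => 0
  | y :: p' => w x y + walk_weight w y p'
  end.

(* [tree_dist t w u v r] : r is the weight of a (the, since t is a tree) simple
   path from u to v in t, i.e. r = d_T(u, v). *)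
Definition tree_dist (R : numDomainType) (N : finType) (t : rel N)
    (w : N -> N -> R) (u v : N) (r : R) : Prop :=
  exists p : seq N,
    [/\ path t u p, last u p = v, uniq (u :: p) & r = walk_weight w u p].

Definition is_interval_PCG (R : realType) (k : nat) (V : finType) (E : rel V)
  : Prop :=
  exists (N : finType) (t : rel N) (w : N -> N -> R) (l : V -> N)
         (I : 'I_k -> interval R),
    [/\ is_tree t,
        (forall x y, t x y -> 0 <= w x y /\ w x y = w y x),
        (* the leaf set of the tree is (a copy of) V(G) *)
        injective l /\ (forall x, is_leaf t x <-> exists v, l v = x),
        (forall i r, r \in I i -> 0 <= r) /\
        (forall i j, i != j -> forall r, r \in I i -> r \notin I j) &
        (forall u v, u != v ->
           (E u v <-> exists r, tree_dist t w (l u) (l v) r /\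
                                exists i, r \in I i))].

Definition compl_graph (V : finType) (E : rel V) : rel V :=
  fun u v => (u != v) && ~~ E u v.

From HB Require Import structures.
From mathcomp Require Import all_boot all_order all_algebra.
From mathcomp Require Import reals.
Set Implicit Arguments. Unset Strict Implicit. Unset Printing Implicit Defensive.
Import Order.TTheory GRing.Theory Num.Theory.

(* Only the finitely many distances d_T(u, v) matter, and they are well defined
   because paths in a tree are unique. Label each distance s that lies in no I_i
   by the interval containing the least covered distance above s, or by the new
   index k if there is none. By convexity of the I_i, no covered distance lies
   between two distances with the same label, and an uncovered distance lying
   between them gets that label too. Hence the convex hulls of the k + 1 label
   classes are pairwise disjoint intervals that contain exactly the uncovered
   distances. *)

Local Open Scope order_scope.

Section TotalOrder.
Context {disp : Order.disp_t} {T : orderType disp}.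

Lemma mem_itv_between (i : interval T) x y z :
  x \in i -> z \in i -> x <= y <= z -> y \in i.
Proof.
case: i => bl br; rewrite !itv_boundlr => /andP[blx _] /andP[_ zbr] /andP[xy yz].
by rewrite (le_trans blx) ?(le_trans _ zbr) // bnd_simp.
Qed.

Lemma has_least (s : seq T) :
  s != [::] -> has (fun b => all (fun c => b <= c) s) s.
Proof.
move=> s0; have := size_sort <=%O s.
case: (sort _ s) (mem_sort <=%O s) (sort_sorted le_total s) => [|b u] sortE.
  by move=> _ /esym/size0nil s_nil; rewrite s_nil in s0.
move=> /= /(order_path_min le_trans) bu _; apply/hasP; exists b.
  by rewrite -sortE inE eqxx.
by apply/allP => c; rewrite -sortE inE => /predU1P[->|/(allP bu)].
Qed.

Definition seq_hull (s : seq T) : interval T :=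
  Interval (\big[Order.min/+oo]_(x <- s) BLeft x)
           (\big[Order.max/-oo]_(x <- s) BRight x).

Lemma in_seq_hull s r :
  (r \in seq_hull s) = has (fun x => x <= r) s && has (fun x => r <= x) s.
Proof.
rewrite itv_boundlr; congr andb.
  by elim: s => [|x s IH]; rewrite ?big_nil ?big_cons //= ge_min IH bnd_simp.
by elim: s => [|x s IH]; rewrite ?big_nil ?big_cons //= le_max IH bnd_simp.
Qed.

End TotalOrder.

Section ComplementOfIntervals.
Context {disp : Order.disp_t} {T : orderType disp} {k : nat}.
Variables (I : 'I_k -> interval T) (S : seq T).
Hypothesis I_disj : forall i j, i != j -> forall r, r \in I i -> r \notin I j.

Definition covered r := [exists i, r \in I i].

Definition covered_above s := [seq c <- S | covered c & s < c].

Definition least_in (A : seq T) (j : 'I_k.+1) : bool :=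
  if unlift ord_max j is Some i
  then has (fun b => (b \in I i) && all (fun c => b <= c) A) A
  else A == [::].

Lemma least_in_exists A : {subset A <= covered} -> exists j, least_in A j.
Proof.
move=> A_cov; have [->|A0] := eqVneq A [::].
  by exists ord_max; rewrite /least_in unlift_none.
have /hasP[b bA bmin] := has_least A0; have /existsP[i bi] := A_cov b bA.
by exists (lift ord_max i); rewrite /least_in liftK; apply/hasP; exists b; rewrite ?bi.
Qed.

Lemma least_in_inj A j j' : least_in A j -> least_in A j' -> j = j'.
Proof.
rewrite /least_in; case: unliftP => [i ->|->]; case: unliftP => [i' ->|->] //.
- move=> /hasP[b bA /andP[bi bmin]] /hasP[b' b'A /andP[b'i b'min]].
  have eb : b = b' by apply: le_anti; rewrite (allP bmin) // (allP b'min).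
  congr lift; apply/eqP; apply: contraT => /I_disj/(_ b bi).
  by rewrite eb b'i.
- by move=> /hasP[b + _] /eqP A0; rewrite A0.
- by move=> /eqP A0 /hasP[b]; rewrite A0.
Qed.

Definition gap j := [seq s <- S | ~~ covered s & least_in (covered_above s) j].

Definition compl_itv j := seq_hull (gap j).

Lemma gap_uncovered s1 s2 c j : s1 \in gap j -> s2 \in gap j -> c \in S ->
  s1 <= c <= s2 -> ~~ covered c.
Proof.
rewrite !mem_filter => /andP[/andP[s1U l1] _] /andP[/andP[s2U l2] _] cS.
move=> /andP[s1c cs2]; apply/negP => cc.
have c_above : c \in covered_above s1.
  by rewrite mem_filter cc cS lt_neqAle s1c !andbT; apply: contraNneq s1U => ->.
move: l1 l2; rewrite /least_in; case: unliftP => [i _|_]; last first.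
  by move=> /eqP A0; rewrite A0 in c_above.
move=> /hasP[b1 _ /andP[b1i b1min]] /hasP[b2 b2A /andP[b2i _]].
move: b2A; rewrite mem_filter => /andP[/andP[_ s2b2] _].
move/negP: s2U; apply; apply/existsP; exists i.
apply: mem_itv_between b1i b2i _.
by rewrite (le_trans (allP b1min c c_above)) // ltW.
Qed.

Lemma covered_above_eq m s : m <= s ->
  (forall c, c \in S -> m < c <= s -> ~~ covered c) ->
  covered_above m = covered_above s.
Proof.
move=> ms uncov; apply: eq_in_filter => c cS /=.
case cc: (covered c) => //=; case: (leP c s) => [cs|sc].
  by apply: contraTF cc => mc; rewrite uncov // mc cs.
exact: le_lt_trans ms sc.
Qed.

Lemma gap_between s1 m s2 j : s1 \in gap j -> s2 \in gap j -> m \in S ->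
  s1 <= m <= s2 -> m \in gap j.
Proof.
move=> g1 g2 mS /andP[s1m ms2].
have uncov c : c \in S -> s1 <= c <= s2 -> ~~ covered c := gap_uncovered g1 g2.
rewrite mem_filter mS uncov ?s1m ?ms2 //= (covered_above_eq ms2).
  by move: g2; rewrite mem_filter andbT => /andP[/andP[]].
by move=> c cS /andP[mc cs2]; rewrite uncov // cs2 (le_trans s1m (ltW mc)).
Qed.

Lemma gap_sub j : {subset gap j <= S}.
Proof. by move=> s; rewrite mem_filter => /andP[]. Qed.

Lemma gap_inj s j j' : s \in gap j -> s \in gap j' -> j = j'.
Proof.
rewrite !mem_filter => /andP[/andP[_ lj] _] /andP[/andP[_ lj'] _].
exact: least_in_inj lj lj'.
Qed.

Lemma compl_itv_lb j r : r \in compl_itv j -> exists2 s, s \in S & s <= r.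
Proof. by rewrite in_seq_hull => /andP[/hasP[s /gap_sub sS sr] _]; exists s. Qed.

Lemma compl_itv_disj i j :
  i != j -> forall r, r \in compl_itv i -> r \notin compl_itv j.
Proof.
move=> /eqP ij r; rewrite !in_seq_hull => /andP[/hasP[s1 g1 s1r] /hasP[s2 g2 rs2]].
apply/negP => /andP[/hasP[s1' g1' s1'r] /hasP[s2' g2' rs2']]; apply: ij.
case: (leP s1 s1') => [s11' | s1's1].
  apply: gap_inj (gap_between g1 g2 (gap_sub g1') _) g1'.
  by rewrite s11' (le_trans s1'r rs2).
apply/esym/(gap_inj (gap_between g1' g2' (gap_sub g1) _) g1).
by rewrite ltW // (le_trans s1r rs2').
Qed.

Lemma compl_itvP s : s \in S -> [exists j, s \in compl_itv j] = ~~ covered s.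
Proof.
move=> sS; apply/existsP/idP => [[j] | sU].
  rewrite in_seq_hull => /andP[/hasP[s1 g1 s1s] /hasP[s2 g2 ss2]].
  by apply: gap_uncovered g1 g2 sS _; rewrite s1s ss2.
have [j lj] : exists j, least_in (covered_above s) j.
  by apply: least_in_exists => c; rewrite mem_filter => /andP[/andP[]].
exists j; rewrite in_seq_hull; apply/andP; split; apply/hasP; exists s => //;
by rewrite mem_filter sU lj sS.
Qed.

End ComplementOfIntervals.

Local Close Scope order_scope.

Lemma split_at_first (T : eqType) (a : pred T) (p : seq T) : has a p ->
  exists p1 z p2, [/\ p = p1 ++ z :: p2, a z & ~~ has a p1].
Proof.
elim: p => [//|x p IH] /=.
case ax: (a x) => /=.
  by exists [::], x, p.
case/IH=> p1 [z [p2 [-> az np1]]].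
by exists (x :: p1), z, p2; rewrite /= ax.
Qed.

Section Acyclic.
Variables (N : finType) (t : rel N).
Hypothesis t_sym : symmetric t.

Lemma cycle_of_diverging_paths a p q :
  path t a p -> path t a q -> uniq (a :: p) -> uniq (a :: q) ->
  last a p = last a q -> p != [::] -> q != [::] -> head a p != head a q ->
  has_cycle t.
Proof.
move=> tp tq up uq pq p0 q0 hpq.
have last_in s : s != [::] -> last a s \in s by case: s => // x s _; exact: mem_last x s.
have /split_at_first[p1 [z [p2 [Ep zq p1q]]]] : has (mem q) p.
  by apply/hasP; exists (last a p); [exact: last_in | rewrite /= pq; exact: last_in].
subst p; case/splitPr: zq tq uq pq hpq p1q => q1 q2 tq uq _ hpq p1q.
(* Go from [a] along [p] to its first vertex [z] on [q], then back along [q]. *)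
exists a, (p1 ++ z :: rev q1).
move: tp tq; rewrite !cat_path /= => /and3P[tp1 tz _] /and3P[tq1 tq1z _].
have : path t z (rcons (rev q1) a).
  rewrite -rev_cons -(belast_rcons a q1 z) -[z in path t z](last_rcons a q1 z).
  by rewrite rev_path (eq_path (e' := t)) ?rcons_path ?tq1 ?tq1z // => x y; rewrite t_sym.
rewrite rcons_path => /andP[tzq1 tq1a]; split.
- rewrite size_cat /= size_rev addnS ltnS addn_gt0 !lt0n !size_eq0.
  by apply: contraNT hpq => /norP[/negPn/eqP-> /negPn/eqP->]; rewrite /= eqxx.
- move: p1q; rewrite has_sym has_cat => /norP[q1p1 _].
  move: up uq; rewrite -!cat_cons !cat_uniq /=.
  move=> /and3P[/andP[ap1 up1] zp _] /and3P[/andP[aq1 uq1] zq _].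
  move: zp zq; rewrite !inE !negb_or => /andP[/andP[za zp1] _] /andP[/andP[_ zq1] _].
  rewrite mem_cat inE !mem_rev !negb_or ap1 aq1 eq_sym za up1 zp1 zq1.
  by rewrite has_rev q1p1 rev_uniq.
- by rewrite tp1 tz tzq1.
- by rewrite last_cat /=.
Qed.

Lemma acyclic_path_unique a p q : ~ has_cycle t ->
  path t a p -> path t a q -> uniq (a :: p) -> uniq (a :: q) ->
  last a p = last a q -> p = q.
Proof.
move=> acyc; elim: p a q => [|x p IH] a [|y q] tp tq up uq pq //.
- by move: pq uq => /= ->; rewrite /= mem_last.
- by move: pq up => /= <-; rewrite /= mem_last.
have [exy|xy] := eqVneq x y; last first.
  by case: acyc; apply: cycle_of_diverging_paths tp tq up uq pq _ _ xy.
subst y; move: tp tq up uq => /= /andP[_ tp] /andP[_ tq] /andP[_ up] /andP[_ uq].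
by rewrite (IH x q tp tq up uq pq).
Qed.

End Acyclic.

Local Open Scope ring_scope.

Lemma tree_dist_ge0 (R : numDomainType) (N : finType) (t : rel N)
    (w : N -> N -> R) a b r :
  (forall x y, t x y -> 0 <= w x y) -> tree_dist t w a b r -> 0 <= r.
Proof.
move=> w_ge0 [p [tp _ _ ->]]; elim: p a tp => [|y p IH] a //= /andP[ty tp].
by rewrite addr_ge0 ?w_ge0 ?IH.
Qed.

Section TreeDistance.
Variables (R : numDomainType) (N : finType) (t : rel N) (w : N -> N -> R).
Hypothesis t_tree : is_tree t.

Lemma tree_dist_unique a b r1 r2 :
  tree_dist t w a b r1 -> tree_dist t w a b r2 -> r1 = r2.
Proof.
case: t_tree => _ t_sym _ acyc [p [tp pb up ->]] [q [tq qb uq ->]].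
by rewrite (acyclic_path_unique t_sym acyc tp tq up uq) // pb qb.
Qed.

Lemma tree_dist_exists a b : exists r, tree_dist t w a b r.
Proof.
case: t_tree => _ _ conn _; have /connectP[p tp ->] := conn a b.
by case: (shortenP tp) => q tq uq _; exists (walk_weight w a q), q.
Qed.

Lemma tree_dist_fun :
  exists d : N -> N -> R, forall a b, tree_dist t w a b (d a b).
Proof.
have /fin_all_exists[d dP] :
    forall a, exists da : N -> R, forall b, tree_dist t w a b (da b).
  by move=> a; have /fin_all_exists := tree_dist_exists a.
by exists d.
Qed.

Lemma tree_dist_exP (P : R -> Prop) a b d : tree_dist t w a b d ->
  (exists r, tree_dist t w a b r /\ P r) <-> P d.
Proof.
move=> dP; split=> [[r [rP Pr]] | Pd]; last by exists d.
by rewrite -(tree_dist_unique rP dP).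
Qed.

End TreeDistance.

Theorem lemma3 (R : realType) (k : nat) (V : finType) (E : rel V) :
  irreflexive E -> symmetric E ->
  is_interval_PCG R k E -> is_interval_PCG R k.+1 (compl_graph E).
Proof.
move=> _ _ [N [t [w [l [I [t_tree w_ok leaves [_ I_disj] E_dist]]]]]].
have [d dP] := tree_dist_fun w t_tree.
pose S := [seq d a b | a <- enum N, b <- enum N].
have d_S a b : d a b \in S by apply: allpairs_f; rewrite mem_enum.
exists N, t, w, l, (compl_itv I S); split => //.
  split; last exact: compl_itv_disj.
  move=> j r /compl_itv_lb[_ /allpairsP[[a b] [_ _ ->]] dr].
  exact: le_trans (tree_dist_ge0 (fun x y txy => (w_ok x y txy).1) (dP a b)) dr.
move=> u v uv; rewrite /compl_graph uv (tree_dist_exP t_tree _ (dP _ _)).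
have -> : E u v = covered I (d (l u) (l v)).
  by apply/idP/existsP; rewrite E_dist // (tree_dist_exP t_tree _ (dP _ _)).
by rewrite -(compl_itvP _ (d_S _ _)); split=> /existsP.
Qed.
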